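(* Let $(\lambda_k)_{k\ge1}$, $(\mu_k)_{k\ge1}$ be nonzero real numbers with $|\lambda_1|>|\mu_1|>|\lambda_2|>|\mu_2|>\dots>0$ and $\lambda_k\to0$. Then $$\lim_{N\to\infty}\frac{1}{\lambda_N^2}\prod_{k=1}^\infty\frac{\lambda_N^2+\mu_k^2}{\lambda_N^2+\lambda_k^2}=\infty$$ if and only if $$\sum_{k\ge1}\Big(\frac{\mu_k^2}{\lambda_{k+1}^2}-1\Big)=\infty.$$ *)

From HB Require Import structures.
From mathcomp Require Import all_boot all_order all_algebra.
From mathcomp Require Import all_classical all_reals all_analysis.
Set Implicit Arguments. Unset Strict Implicit. Unset Printing Implicit Defensive.
Import Order.TTheory GRing.Theory Num.Theory.
Import numFieldNormedType.Exports.
Local Open Scope ring_scope.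

Definition infprod (R : realType) (F : nat -> R) : R :=
  limn (fun n : nat => (\prod_(k < n) F k : R)).

From HB Require Import structures.
From mathcomp Require Import all_boot all_order all_algebra.
From mathcomp Require Import all_classical all_reals all_analysis.
From mathcomp Require Import ring lra.
Import Order.TTheory GRing.Theory Num.Theory.
Import numFieldNormedType.Exports.
Local Open Scope classical_set_scope.
Local Open Scope ring_scope.

(* Write L k = lam_k^2, M k = mu_k^2 and a = lam_N^2.  The partial products
   telescope: prod_{k<n} (a + M k)/(a + L k) = (a + L n)/(a + L 0) * Q_n(a)
   with Q_n(a) = prod_{k<n} (a + M k)/(a + L (k+1)), whose factors are >= 1
   and increase to r k = M k / L (k+1) as a decreases to 0.  Hence the
   quantity in the theorem is lim_n Q_n(a) / (a + L 0), which is squeezed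
   between Q_n(a) / (2 L 0) (for every fixed n, once a <= L 0) and
   sup_n prod_{k<n} r k / L 0.  So it tends to +oo iff prod_k r k diverges,
   i.e. iff sum_k (r k - 1) diverges, since
   1 + sum (r k - 1) <= prod r k <= exp (sum (r k - 1)). *)

Section products_of_factors_ge1.
Context {R : realType} {r : nat -> R}.
Hypothesis r_ge1 : forall k, 1 <= r k.

Lemma prod_ge1 n : 1 <= \prod_(k < n) r k.
Proof.
elim: n => [|n IH]; first by rewrite big_ord0.
by rewrite big_ord_recr /=; have := r_ge1 n; nra.
Qed.

Lemma nondecreasing_prod : nondecreasing_seq (fun n => \prod_(k < n) r k).
Proof.
apply/nondecreasing_seqP => n; rewrite big_ord_recr /= ler_peMr ?r_ge1 //.
exact: le_trans ler01 (prod_ge1 n).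
Qed.

Lemma series_le_prod n : 1 + series (fun k => r k - 1) n <= \prod_(k < n) r k.
Proof.
elim: n => [|n IH]; first by rewrite big_ord0 /series /= big_geq // addr0.
rewrite seriesSr big_ord_recr /=.
have series_ge0 : 0 <= series (fun k => r k - 1) n.
  by apply: sumr_ge0 => k _; rewrite subr_ge0.
by have := r_ge1 n; nra.
Qed.

Lemma prod_le_expR_series n : \prod_(k < n) r k <= expR (series (fun k => r k - 1) n).
Proof.
rewrite /series /= big_mkord expR_sum; apply: ler_prod => k _.
rewrite (le_trans ler01 (r_ge1 k)) /=.
by have := expR_ge1Dx (r k - 1); rewrite addrC subrK.
Qed.

Lemma prod_cvgry_series :
  (fun n => \prod_(k < n) r k) @ \oo --> +oo
  <-> series (fun k => r k - 1) @ \oo --> +oo.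
Proof.
split=> /cvgryPge h; apply/cvgryPge => B.
- apply: filterS (h (expR B)) => n hn.
  by rewrite -ler_expR; exact: le_trans hn (prod_le_expR_series n).
- apply: filterS (h B) => n hn.
  by have := series_le_prod n; lra.
Qed.

End products_of_factors_ge1.

Section interlaced_sequences.
Variables (R : realType) (L M : nat -> R).
Hypothesis M_gt0 : forall k, 0 < M k.
Hypothesis M_lt_L : forall k, M k < L k.
Hypothesis L_lt_M : forall k, L k.+1 < M k.
Hypothesis L_cvg0 : L @ \oo --> 0.

Lemma L_gt0 k : 0 < L k.
Proof. exact: lt_trans (M_gt0 k) (M_lt_L k). Qed.

Definition shift_factor (a : R) k := (a + M k) / (a + L k.+1).

Definition shift_prod a n := \prod_(k < n) shift_factor a k.

Lemma shift_factor_ge1 a k : 0 <= a -> 1 <= shift_factor a k.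
Proof.
move=> a_ge0; have := L_lt_M k; have := L_gt0 k.+1 => *.
by rewrite /shift_factor ler_pdivlMr; lra.
Qed.

Lemma shift_factor_le_at0 a k : 0 <= a -> shift_factor a k <= shift_factor 0 k.
Proof.
move=> a_ge0; have := L_lt_M k; have := L_gt0 k.+1 => *.
rewrite /shift_factor !add0r ler_pdivrMr; last lra.
by rewrite mulrAC ler_pdivlMr //; nra.
Qed.

Lemma shift_prod_le_at0 a n : 0 <= a -> shift_prod a n <= shift_prod 0 n.
Proof.
move=> a_ge0; apply: ler_prod => k _.
by rewrite shift_factor_le_at0 // (le_trans ler01 (shift_factor_ge1 a k a_ge0)).
Qed.

Lemma nondecreasing_shift_prod a : 0 <= a -> nondecreasing_seq (shift_prod a).
Proof. by move=> a_ge0; apply: nondecreasing_prod => k; exact: shift_factor_ge1. Qed.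

Lemma ratio_prod_telescope a n : 0 <= a ->
  \prod_(k < n) ((a + M k) / (a + L k)) * (a + L 0) = (a + L n) * shift_prod a n.
Proof.
move=> a_ge0; elim: n => [|n IH]; first by rewrite /shift_prod !big_ord0 mul1r mulr1.
rewrite big_ord_recr /= mulrAC IH /shift_prod big_ord_recr /= /shift_factor.
have := L_gt0 n; have := L_gt0 n.+1 => *.
by field; rewrite !gt_eqF //; lra.
Qed.

Lemma ratio_prod_le1 a n : 0 <= a -> \prod_(k < n) ((a + M k) / (a + L k)) <= 1.
Proof.
move=> a_ge0; apply: prodr_ile1 => k _; have := M_gt0 k; have := M_lt_L k => *.
by rewrite divr_ge0 /= ?ler_pdivrMr; lra.
Qed.

Lemma shift_prod_ub a n : 0 < a -> shift_prod a n <= (a + L 0) / a.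
Proof.
move=> a_gt0; have a_ge0 := ltW a_gt0.
have telescope := ratio_prod_telescope a n a_ge0.
have ratio_le1 := ratio_prod_le1 a n a_ge0.
have shift_prod_ge1 : 1 <= shift_prod a n.
  exact: prod_ge1 (fun k => shift_factor_ge1 a k a_ge0) n.
have := L_gt0 n; have := L_gt0 0 => *.
by rewrite ler_pdivlMr //; nra.
Qed.

Lemma shift_prod_cvg a : 0 < a -> shift_prod a @ \oo --> limn (shift_prod a).
Proof.
move=> a_gt0; apply/cvgP/nondecreasing_is_cvgn; first exact/nondecreasing_shift_prod/ltW.
by exists ((a + L 0) / a) => _ [n _ <-]; exact: shift_prod_ub.
Qed.

Lemma infprod_ratio a : 0 < a ->
  infprod (fun k => (a + M k) / (a + L k)) = a / (a + L 0) * limn (shift_prod a).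
Proof.
move=> a_gt0; have := L_gt0 0 => L0_gt0; rewrite /infprod.
have -> : (fun n => \prod_(k < n) ((a + M k) / (a + L k)))
          = (fun n => (a + L n) / (a + L 0) * shift_prod a n).
  apply/funext => n; apply: (@mulIf _ (a + L 0)); first by rewrite gt_eqF //; lra.
  by rewrite ratio_prod_telescope ?(ltW a_gt0) //; field; rewrite gt_eqF //; lra.
apply: cvg_lim => //; rewrite -[X in X / _](addr0 a).
apply: cvgM; last exact: shift_prod_cvg.
by apply: cvgM; [apply: cvgD; [exact: cvg_cst | exact: L_cvg0] | exact: cvg_cst].
Qed.

Lemma cvg_shift_prod (a : nat -> R) n :
  a @ \oo --> 0 -> (fun N => shift_prod (a N) n) @ \oo --> shift_prod 0 n.
Proof.
move=> a_cvg0; apply: cvg_big => [|k _]; first exact: mul_continuous.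
apply: cvgM; first by apply: cvgD; [exact: a_cvg0 | exact: cvg_cst].
apply: cvgV; first by rewrite add0r gt_eqF ?L_gt0.
by apply: cvgD; [exact: a_cvg0 | exact: cvg_cst].
Qed.

Lemma shift_prod_le_limn a n : 0 < a -> shift_prod a n <= limn (shift_prod a).
Proof.
move=> a_gt0; apply: nondecreasing_cvgn_le; first exact/nondecreasing_shift_prod/ltW.
exact/cvgP/shift_prod_cvg.
Qed.

Lemma limn_shift_prod_le a C :
  0 < a -> (forall n, shift_prod 0 n <= C) -> limn (shift_prod a) <= C.
Proof.
move=> a_gt0 C_ub; apply: limr_le; first exact/cvgP/shift_prod_cvg.
by apply: nearW => n; exact: le_trans (shift_prod_le_at0 a n (ltW a_gt0)) (C_ub n).
Qed.

Lemma ratio_infprod_cvgry (a : nat -> R) :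
  (forall N, 0 < a N) -> a @ \oo --> 0 ->
  (fun N => (a N)^-1 * infprod (fun k => (a N + M k) / (a N + L k))) @ \oo --> +oo
  <-> shift_prod 0 @ \oo --> +oo.
Proof.
move=> a_gt0 a_cvg0; have L0_gt0 := L_gt0 0.
have -> : (fun N => (a N)^-1 * infprod (fun k => (a N + M k) / (a N + L k)))
          = (fun N => limn (shift_prod (a N)) / (a N + L 0)).
  apply/funext => N; have := a_gt0 N => aN_gt0.
  by rewrite infprod_ratio //; field; rewrite !gt_eqF //; lra.
split=> [/cvgryPge G_cvgry | /cvgryPge P_cvgry].
- apply: nondecreasing_dvgn_lt; first exact: nondecreasing_shift_prod.
  move=> /(nondecreasing_cvgn_le (nondecreasing_shift_prod 0 (lexx 0))) P_ub.
  set C := limn (shift_prod 0) in P_ub.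
  have [N G_ge] := filter_ex (G_cvgry (C / L 0 + 1)); move: G_ge; apply/negP.
  have aN_gt0 := a_gt0 N.
  have limn_ge1 : 1 <= limn (shift_prod (a N)).
    by have := shift_prod_le_limn (a N) 0 aN_gt0; rewrite /shift_prod big_ord0.
  have G_le : limn (shift_prod (a N)) / (a N + L 0) <= C / L 0.
    apply: ler_pM; [lra | by rewrite invr_ge0; lra | exact: limn_shift_prod_le |].
    by rewrite lef_pV2 ?posrE; lra.
  by rewrite -ltNge; lra.
- apply/cvgryPge => B.
  have [n P_ge] := filter_ex (P_cvgry (2 * L 0 * `|B| + 1)).
  have Q_gt := cvgr_gt _ (cvg_shift_prod a n a_cvg0) (2 * L 0 * `|B|) ltac:(lra).
  have a_lt := cvgr_lt _ a_cvg0 (L 0) L0_gt0.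
  near=> N.
  have [QN_gt aN_lt] : 2 * L 0 * `|B| < shift_prod (a N) n /\ a N < L 0.
    by split; near: N; [exact: Q_gt | exact: a_lt].
  have aN_gt0 := a_gt0 N.
  have := shift_prod_le_limn (a N) n aN_gt0; have := ler_norm B; have := normr_ge0 B.
  by rewrite ler_pdivlMr; [nra | lra].
Unshelve. all: by end_near.
Qed.

Theorem ratio_infprod_cvgry_series (a : nat -> R) :
  (forall N, 0 < a N) -> a @ \oo --> 0 ->
  (fun N => (a N)^-1 * infprod (fun k => (a N + M k) / (a N + L k))) @ \oo --> +oo
  <-> series (fun k => M k / L k.+1 - 1) @ \oo --> +oo.
Proof.
move=> a_gt0 a_cvg0; apply: iff_trans (ratio_infprod_cvgry _ a_gt0 a_cvg0) _.
have -> : (fun k => M k / L k.+1 - 1) = (fun k => shift_factor 0 k - 1).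
  by apply/funext => k; rewrite /shift_factor !add0r.
exact: prod_cvgry_series (fun k => shift_factor_ge1 0 k (lexx 0)).
Qed.

End interlaced_sequences.

Theorem lemma4p8 (R : realType) (lam mu : nat -> R)
  (hmu0 : forall k, 0 < `|mu k|)
  (hlm : forall k, `|mu k| < `|lam k|)
  (hml : forall k, `|lam k.+1| < `|mu k|)
  (hlim : lam @ \oo --> 0) :
  ((fun N => (lam N ^+ 2)^-1 *
      infprod (fun k => (lam N ^+ 2 + mu k ^+ 2) / (lam N ^+ 2 + lam k ^+ 2)))
     @ \oo --> +oo)
  <->
  ((series (fun k => mu k ^+ 2 / lam k.+1 ^+ 2 - 1)) @ \oo --> +oo).
Proof.
have sqr_lt (x y : R) : `|x| < `|y| -> x ^+ 2 < y ^+ 2.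
  by rewrite -(real_normK (num_real x)) -(real_normK (num_real y)) ltr_sqr ?nnegrE.
have mu2_gt0 k : 0 < mu k ^+ 2.
  by have := sqr_lt 0 (mu k); rewrite normr0 expr0n; apply.
have lam2_gt0 k : 0 < lam k ^+ 2 by exact: lt_trans (mu2_gt0 k) (sqr_lt _ _ (hlm k)).
have lam2_cvg0 : (fun k => lam k ^+ 2) @ \oo --> 0.
  by have := cvg_comp _ _ hlim (@exprn_continuous R 2 0); rewrite expr0n.
exact: (ratio_infprod_cvgry_series _ _ _ mu2_gt0 (fun k => sqr_lt _ _ (hlm k))
         (fun k => sqr_lt _ _ (hml k)) lam2_cvg0 _ lam2_gt0 lam2_cvg0).
Qed.
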